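(* Let $y=f(x)$ be an ROC curve and let $0\le a<b\le 1$. Suppose $(h,k)$ is an optimal point of this ROC curve for every $t\in[a,b]$, and let $c_t(h,k)=th+(1-t)(1-k)$ denote its normalized expected cost. Then the volume over the ROC surface on $[a,b]$ satisfies $$\mathrm{VOROS}(f,[a,b])=\frac{1}{b-a}\int_a^b\left(1-\frac{\big(c_t(h,k)\big)^2}{2t(1-t)}\right)dt.$$
   Context: ROC space is $[0,1]^2$, a point $(x,y)$ representing a binary classifier with false positive rate $x$ and true positive rate $y$. An ROC curve is the graph of a function $f:[0,1]\to[0,1]$ obtained by joining by line segments finitely many points of ROC space, including $(0,0)$ and $(1,1)$. For $t\in[0,1]$, the normalized expected cost of $(x,y)$ is $\mathrm{Cost}(x,y,t)=tx+(1-t)(1-y)$. The upper convex hull of the curve is the boundary of the convex hull of the points of its graph together with $(0,0)$, $(1,1)$, $(1,0)$. For $t\in[0,1]$, an optimal point of the ROC curve is a point $(h,k)$ of the upper convex hull having a supporting line of slope $\frac{t}{1-t}$ (vertical if $t=1$), i.e. the convex hull lies entirely in the closed half-plane bounded by the line through $(h,k)$ of that slope on the side of higher cost; equivalently $\mathrm{Cost}(h,k,t)\le\mathrm{Cost}(x,y,t)$ for all $(x,y)$ in that convex hull. The area of lesser classifiers $A_t(h,k)$ is the area of the set of $(h',k')\in[0,1]^2$ with $\mathrm{Cost}(h',k',t)>\mathrm{Cost}(h,k,t)$. The volume over the ROC surface on $[a,b]$ (with the standard Lebesgue measure on $t$) is $\mathrm{VOROS}(f,[a,b])=\frac{1}{b-a}\int_a^b\max_{x\in[0,1]}A_t(x,f(x))\,dt$.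 *)

From HB Require Import structures.
From mathcomp Require Import all_boot all_order all_algebra.
From mathcomp Require Import all_classical all_reals all_analysis.
Set Implicit Arguments. Unset Strict Implicit. Unset Printing Implicit Defensive.
Import Order.TTheory GRing.Theory Num.Theory.
Import numFieldNormedType.Exports.
Local Open Scope classical_set_scope.
Local Open Scope ring_scope.

Section ROC.
Variable R : realType.

Definition Cost (x y t : R) : R := t * x + (1 - t) * (1 - y).

Definition ROC_curve (f : R -> R) : Prop :=
  exists s : seq (R * R),
    [/\ (1 < size s)%N,
        nth (0,0) s 0 = (0, 0),
        nth (0,0) s (size s).-1 = (1, 1),
        (forall i, (i < size s)%N ->
           0 <= (nth (0,0) s i).1 <= 1 /\ 0 <= (nth (0,0) s i).2 <= 1)
      & (forall i, (i.+1 < size s)%N -> (nth (0,0) s i).1 < (nth (0,0) s i.+1).1)] /\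
      (forall i x, (i.+1 < size s)%N ->
           (nth (0,0) s i).1 <= x <= (nth (0,0) s i.+1).1 ->
           f x = (nth (0,0) s i).2 + ((nth (0,0) s i.+1).2 - (nth (0,0) s i).2)
                 * (x - (nth (0,0) s i).1)
                 / ((nth (0,0) s i.+1).1 - (nth (0,0) s i).1)).

Definition conv_hull (S : set (R * R)) : set (R * R) :=
  [set p | exists n (w : 'I_n -> R) (q : 'I_n -> R * R),
     [/\ forall i, 0 <= w i, \sum_(i < n) w i = 1, forall i, S (q i)
       & p = (\sum_(i < n) w i * (q i).1, \sum_(i < n) w i * (q i).2)]].

Definition ROC_points (f : R -> R) : set (R * R) :=
  [set p | (0 <= p.1 <= 1 /\ p.2 = f p.1) \/ p = (0,0) \/ p = (1,1) \/ p = (1,0)].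

Definition ROC_hull (f : R -> R) : set (R * R) := conv_hull (ROC_points f).

(* upper convex hull: boundary of the convex hull *)
Definition upper_hull (f : R -> R) : set (R * R) :=
  closure (ROC_hull f) `\` interior (ROC_hull f).

Definition optimal_point (f : R -> R) (t h k : R) : Prop :=
  upper_hull f (h, k) /\
  forall p, ROC_hull f p -> Cost h k t <= Cost p.1 p.2 t.

Definition lesser_area (t h k : R) : \bar R :=
  ((@lebesgue_measure R) \x (@lebesgue_measure R))
    [set p : R * R | [/\ 0 <= p.1 <= 1, 0 <= p.2 <= 1 &
                       Cost h k t < Cost p.1 p.2 t]].

(* volume over the ROC surface on [a,b]; the max over x is written as a
   supremum (it is attained) *)
Definition VOROS (f : R -> R) (a b : R) : \bar R :=
  ((b - a)^-1)%:E *
  (\int[@lebesgue_measure R]_(t in `[a, b])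
     ereal_sup [set lesser_area t x (f x) | x in `[0%R, 1%R]])%E.

End ROC.

From HB Require Import structures.
From mathcomp Require Import all_boot all_order all_algebra.
From mathcomp Require Import all_classical all_reals all_analysis.
From mathcomp Require Import measurable_realfun ring lra zify.
Import Order.TTheory GRing.Theory Num.Theory.
Import numFieldNormedType.Exports.
Local Open Scope classical_set_scope.
Local Open Scope ring_scope.

(* For fixed t the cost is affine, so over the convex hull of the ROC points it
   is minimised at a vertex (x0, f x0) of the curve, and the minimal cost c is at
   most min(t, 1 - t) because (0,0) and (1,1) are vertices.  The optimal point
   (h, k) lies in the closure of the hull and is no worse than (x0, f x0), so its
   cost is exactly c.  Lesser areas decrease with the cost, hence the maximum of
   A_t along the curve is attained at x0; the complement of the lesser
   classifiers in the unit square is the triangle {cost <= c} with legs c / t and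
   c / (1 - t), of area c^2 / (2 t (1 - t)). *)

Lemma integral_deriv_poly (R : realType) (P : {poly R}) (a b : R) : a < b ->
  (\int[@lebesgue_measure R]_(x in `[a, b]) (P^`()).[x]%:E = (P.[b] - P.[a])%:E)%E.
Proof.
move=> ab; rewrite (@continuous_FTC2 _ _ (horner P)) ?EFinB //.
- by apply: continuous_subspaceT; exact: continuous_horner.
- split.
  + by move=> x _; exact: derivable_horner.
  + by apply: cvg_at_right_filter; exact: continuous_horner.
  + by apply: cvg_at_left_filter; exact: continuous_horner.
- by move=> x _; rewrite -derivE.
Qed.

Section CostSets.
Context {R : realType}.
Implicit Types t c : R.

Definition cost_le t c : set (R * R) := [set p | Cost p.1 p.2 t <= c].
Definition cost_ge t c : set (R * R) := [set p | c <= Cost p.1 p.2 t].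

Lemma Cost_ge0 {t x y : R} : 0 <= t <= 1 -> 0 <= x -> y <= 1 -> 0 <= Cost x y t.
Proof. by move=> /andP[t0 t1] x0 y1; rewrite addr_ge0 ?mulr_ge0 ?subr_ge0. Qed.

Lemma continuous_Cost t : continuous (fun p : R * R => Cost p.1 p.2 t).
Proof.
move=> p; apply: cvgD; apply: cvgM; try exact: cvg_cst.
- exact: cvg_fst.
- by apply: cvgB; [exact: cvg_cst | exact: cvg_snd].
Qed.

Lemma closed_cost_ge t c : closed (cost_ge t c).
Proof. exact: (continuous_closedP _).1 (continuous_Cost t) _ (@closed_ge R c). Qed.

Lemma sub_conv_hull (S : set (R * R)) : S `<=` conv_hull S.
Proof.
move=> p Sp; exists 1%N, (fun _ => 1), (fun _ => p); split => //.
- by rewrite big_ord1.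
- by rewrite !big_ord1 !mul1r; case: p Sp.
Qed.

Lemma conv_hull_cost_ge {S : set (R * R)} {t c : R} :
  S `<=` cost_ge t c -> conv_hull S `<=` cost_ge t c.
Proof.
move=> Sc _ [n [w [q [w0 w1 Sq ->]]]]; rewrite /cost_ge /=.
have -> : Cost (\sum_(i < n) w i * (q i).1) (\sum_(i < n) w i * (q i).2) t =
          \sum_(i < n) w i * Cost (q i).1 (q i).2 t.
  rewrite [RHS](eq_bigr (fun i => t * (w i * (q i).1) +
                                  ((1 - t) * w i - (1 - t) * (w i * (q i).2))));
    last by move=> i _; rewrite /Cost; ring.
  by rewrite !big_split /= sumrN -!mulr_sumr w1 /Cost; ring.
rewrite -[c]mul1r -w1 mulr_suml; apply: ler_sum => i _.
by apply: ler_wpM2l; [exact: w0 | exact: Sc].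
Qed.

Lemma closure_cost_ge {A : set (R * R)} {t c : R} :
  A `<=` cost_ge t c -> closure A `<=` cost_ge t c.
Proof.
move=> Ac; rewrite [X in _ `<=` X](closure_id _).1; first exact: closureS.
exact: closed_cost_ge.
Qed.

End CostSets.

Section LesserArea.
Context {R : realType}.
Implicit Types t c : R.
Local Notation mu := ((@lebesgue_measure R) \x (@lebesgue_measure R))%E.
Local Notation unit_itv := ([set` `[0%R, 1%R]] : set R).

Definition unit_square : set (R * R) := unit_itv `*` unit_itv.

Lemma measurable_unit_square : measurable unit_square.
Proof. by apply: measurableX; exact: measurable_itv. Qed.

Lemma lebesgue_measure_unit_itv : lebesgue_measure unit_itv = 1%E.
Proof. by rewrite lebesgue_measure_itv /= lte_fin ltr01 oppr0 adde0. Qed.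

Lemma measure_unit_square : mu unit_square = 1%E.
Proof.
rewrite product_measure1E; try exact: measurable_itv.
by rewrite -[RHS]mule1; congr (_ * _)%E; exact: lebesgue_measure_unit_itv.
Qed.

Lemma measurable_cost_le t c : measurable (cost_le t c).
Proof.
have mC : measurable_fun setT (fun p : R * R => Cost p.1 p.2 t).
  by apply: measurable_funD; apply: measurable_funM => //; exact: measurable_funB.
have := mC measurableT _ (measurable_itv `]-oo, c]); rewrite setTI.
by congr measurable; apply/seteqP; split => p.
Qed.

Lemma lesser_areaE t h k :
  lesser_area t h k = mu (unit_square `\` cost_le t (Cost h k t)).
Proof.
congr mu; apply/seteqP; split => -[x y]; rewrite /unit_square /cost_le /= !in_itv /=.
  by case=> -> -> /lt_geF ->.
by case=> -[-> ->] /negP; rewrite -ltNge.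
Qed.

Lemma lesser_area_measure t h k : lesser_area t h k =
  (1 - mu (unit_square `&` cost_le t (Cost h k t)))%E.
Proof.
have finite_square : (mu unit_square < +oo)%E by rewrite measure_unit_square ltry.
rewrite lesser_areaE measureD //; first by congr (_ - _)%E; exact: measure_unit_square.
- exact: measurable_unit_square.
- exact: measurable_cost_le.
Qed.

Lemma le_lesser_area t h k h' k' : Cost h k t <= Cost h' k' t ->
  (lesser_area t h' k' <= lesser_area t h k)%E.
Proof.
move=> le_cost; rewrite !lesser_areaE; apply: le_measure; rewrite ?inE.
- by apply: measurableD; [exact: measurable_unit_square | exact: measurable_cost_le].
- by apply: measurableD; [exact: measurable_unit_square | exact: measurable_cost_le].
- move=> p [sq_p not_le_p]; split => // le_p; apply: not_le_p.
  exact: le_trans le_p le_cost.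
Qed.

Lemma measure_cost_le0 t : 0 <= t <= 1 -> mu (unit_square `&` cost_le t 0) = 0%E.
Proof.
move=> /andP[t0 t1].
pose left_edge := ([set` `[0%R, 0%R]] : set R) `*` unit_itv.
pose top_edge := unit_itv `*` ([set` `[1%R, 1%R]] : set R).
have m_left : measurable left_edge by apply: measurableX; exact: measurable_itv.
have m_top : measurable top_edge by apply: measurableX; exact: measurable_itv.
have null_point (r : R) : lebesgue_measure ([set` `[r, r]] : set R) = 0%E.
  by rewrite lebesgue_measure_itv /= lte_fin ltxx.
have null_left : mu left_edge = 0%E.
  rewrite product_measure1E; try exact: measurable_itv.
  rewrite -[RHS](mul0e 1%E); congr (_ * _)%E.
    exact: null_point.
  exact: lebesgue_measure_unit_itv.
have null_top : mu top_edge = 0%E.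
  rewrite product_measure1E; try exact: measurable_itv.
  rewrite -[RHS](mule0 1%E); congr (_ * _)%E.
    exact: lebesgue_measure_unit_itv.
  exact: null_point.
apply: (@subset_measure0 _ _ _ mu _ (left_edge `|` top_edge)).
- by apply: measurableI; [exact: measurable_unit_square | exact: measurable_cost_le].
- exact: measurableU.
- move=> [x y]; rewrite /unit_square /cost_le /Cost /= !in_itv /=.
  move=> -[[/andP[x0 x1] /andP[y0 y1]] cost0].
  (* both summands of the cost vanish: x = 0, or t = 0 and y = 1 *)
  have tx_ge0 : 0 <= t * x by rewrite mulr_ge0.
  have ty_ge0 : 0 <= (1 - t) * (1 - y) by rewrite mulr_ge0 ?subr_ge0.
  have /eqP : t * x = 0 by lra.
  rewrite mulf_eq0 => /orP[/eqP t_eq0 | /eqP x_eq0];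
    rewrite /left_edge /top_edge /= !in_itv /= x0 x1 y0 y1 /= ?andbT.
    right; have : (1 - t) * (1 - y) = 0 by lra.
    by rewrite t_eq0 subr0 mul1r; lra.
  by left; rewrite x_eq0.
- by rewrite -null_left; apply: measureU0.
Qed.

(* The vertical section at x is the segment [1 - (c - t x) / (1 - t), 1]. *)
Lemma lebesgue_xsection_cost_le t c x : 0 < t < 1 -> 0 <= c <= t -> c <= 1 - t ->
  lebesgue_measure (xsection (unit_square `&` cost_le t c) x) =
  ((fun x => ((c - t * x) / (1 - t))%:E) \_ [set` `[0%R, c / t]]) x.
Proof.
move=> /andP[t0 t1] /andP[c0 ct] c1t; have t1' : 0 < 1 - t by rewrite subr_gt0.
rewrite patchE; case: ifPn; rewrite mem_setE in_itv /=.
- move=> /andP[x0 x_le]; pose d := (c - t * x) / (1 - t).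
  have tx_le : t * x <= c by rewrite mulrC -ler_pdivlMr.
  have x1 : x <= 1 by apply: le_trans x_le _; rewrite ler_pdivrMr // mul1r.
  have d0 : 0 <= d by rewrite divr_ge0 ?subr_ge0 // ltW.
  have d1 : d <= 1 by rewrite ler_pdivrMr // mul1r; have := mulr_ge0 (ltW t0) x0; lra.
  have -> : xsection (unit_square `&` cost_le t c) x = [set` `[1 - d, 1]].
    apply/seteqP; split => y;
      rewrite /xsection /unit_square /cost_le /Cost /= inE /= !in_itv /=.
    + by case=> -[_ /andP[_ ->]]; rewrite andbT lerBlDl -lerBlDr ler_pdivlMr // mulrC; lra.
    + move=> /andP[dy y1]; rewrite x0 x1 y1; split; first by split => //; lra.
      by move: dy; rewrite lerBlDl -lerBlDr ler_pdivlMr // mulrC; lra.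
  rewrite -/d lebesgue_measure_itv /= lte_fin; case: ifPn => [_ | ].
    by rewrite -EFinD; congr EFin; ring.
  by rewrite -leNgt => d_le0; congr EFin; lra.
- move=> x_out; rewrite [X in lebesgue_measure X](_ : _ = set0) ?measure0 //.
  apply/seteqP; split => y //.
  rewrite /xsection /unit_square /cost_le /Cost /= inE /= !in_itv /=.
  move=> -[[/andP[x0 x1] /andP[y0 y1]] cost_le_c]; apply: (negP x_out).
  have : 0 <= (1 - t) * (1 - y) by rewrite mulr_ge0 ?subr_ge0 // ltW.
  by rewrite x0 ler_pdivlMr // mulrC; lra.
Qed.

Lemma measure_cost_le t c : 0 < c <= t -> c <= 1 - t ->
  mu (unit_square `&` cost_le t c) = (c ^+ 2 / (2 * t * (1 - t)))%:E.
Proof.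
move=> /andP[c0 ct] c1t.
have t0 : 0 < t by exact: lt_le_trans ct.
have t1 : t < 1 by rewrite -subr_gt0; exact: lt_le_trans c1t.
have t1' : 0 < 1 - t by rewrite subr_gt0.
have t01 : 0 < t < 1 by rewrite t0 t1.
have c0t : 0 <= c <= t by rewrite ltW.
have section x := lebesgue_xsection_cost_le t c x t01 c0t c1t.
rewrite [LHS]/product_measure1 /=.
under eq_integral do rewrite section.
rewrite -integral_mkcond.
pose P : {poly R} := (c / (1 - t)) *: 'X - (t / (2 * (1 - t))) *: 'X^2.
transitivity (\int[@lebesgue_measure R]_(x in `[0%R, (c / t)%R]) (P^`()).[x]%:E)%E.
  apply: eq_integral => x _; congr EFin.
  rewrite /P derivB !derivZ derivX derivXn !hornerE /=; field.
  by rewrite gt_eqF.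
rewrite integral_deriv_poly ?divr_gt0 //; congr EFin.
rewrite /P !hornerE /=; field.
by rewrite !gt_eqF.
Qed.

(* At t = 0 or t = 1 the cost is 0 and the quotient below is the junk value 0 / 0 = 0. *)
Lemma lesser_area_cost t h k : 0 <= t <= 1 -> 0 <= Cost h k t <= t ->
  Cost h k t <= 1 - t ->
  lesser_area t h k = (1 - Cost h k t ^+ 2 / (2 * t * (1 - t)))%:E.
Proof.
move=> t01 /andP[c0 ct] c1t; rewrite lesser_area_measure EFinB.
have [c_gt0 | c_le0] := ltrP 0 (Cost h k t); first by rewrite measure_cost_le ?c_gt0.
have -> : Cost h k t = 0 by apply/eqP; rewrite eq_le c_le0 c0.
by rewrite measure_cost_le0 // expr0n /= mul0r.
Qed.

Lemma ereal_sup_lesser_area {f : R -> R} {t x0 : R} : 0 <= x0 <= 1 ->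
  (forall x, 0 <= x <= 1 -> Cost x0 (f x0) t <= Cost x (f x) t) ->
  ereal_sup [set lesser_area t x (f x) | x in `[0%R, 1%R]] = lesser_area t x0 (f x0).
Proof.
move=> x01 x0_min; apply/eqP; rewrite eq_le; apply/andP; split.
- apply: ge_ereal_sup => _ [x x01' <-]; apply: le_lesser_area; apply: x0_min.
  by move: x01'; rewrite /= in_itv.
- by apply: ereal_sup_ubound; exists x0; rewrite //= in_itv.
Qed.

End LesserArea.

Lemma exists_segment {disp} {T : orderType disp} (w : nat -> T) m x : (0 < m)%N ->
  (w 0%N <= x <= w m)%O -> exists2 i, (i < m)%N & (w i <= x <= w i.+1)%O.
Proof.
elim: m => [//|m IH] _ /andP[x0 xm].
case: m IH xm => [|m] IH xm; first by exists 0%N; rewrite ?x0.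
have [x_le | x_gt] := leP x (w m.+1).
  by have [i i_lt xi] := IH isT (introT andP (conj x0 x_le)); exists i => //; exact: ltnW.
by exists m.+1; rewrite // (ltW x_gt) xm.
Qed.

Section ROCVertices.
Context {R : realType} {f : R -> R} {s : seq (R * R)}.
Local Notation v i := (nth (0, 0) s i).
Hypotheses (s_size : (1 < size s)%N) (s_first : v 0%N = (0, 0))
  (s_last : v (size s).-1 = (1, 1))
  (s_incr : forall i, (i.+1 < size s)%N -> (v i).1 < (v i.+1).1)
  (f_interp : forall i x, (i.+1 < size s)%N -> (v i).1 <= x <= (v i.+1).1 ->
     f x = (v i).2 + ((v i.+1).2 - (v i).2) * (x - (v i).1) / ((v i.+1).1 - (v i).1)).

Lemma f_vertex i : (i < size s)%N -> f (v i).1 = (v i).2.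
Proof.
move=> i_lt; have [i1_lt | s_le] := ltnP i.+1 (size s).
  by rewrite (f_interp _ _ i1_lt) ?lexx ?ltW ?s_incr // subrr mulr0 mul0r addr0.
have i_gt0 : (0 < i)%N by lia.
have prev_lt : (i.-1.+1 < size s)%N by rewrite prednK.
have gap := s_incr _ prev_lt; rewrite prednK // in gap.
rewrite (f_interp _ _ prev_lt) prednK // ?lexx ?ltW //.
by field; rewrite subr_eq0 gt_eqF.
Qed.

Lemma curve_cost_ge_vertex t x : 0 <= x <= 1 ->
  exists2 i, (i < size s)%N & Cost (v i).1 (v i).2 t <= Cost x (f x) t.
Proof.
move=> x01.
have [i i_lt /andP[xi xi1]] : exists2 i, (i < (size s).-1)%N & (v i).1 <= x <= (v i.+1).1.
  by apply: exists_segment; rewrite ?s_first ?prednK ?s_last //; lia.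
have i1_lt : (i.+1 < size s)%N by lia.
have gap := s_incr _ i1_lt.
pose lam := (x - (v i).1) / ((v i.+1).1 - (v i).1).
have lam0 : 0 <= lam by rewrite divr_ge0 // subr_ge0 // ltW.
have lam1 : lam <= 1 by rewrite ler_pdivrMr ?subr_gt0 // mul1r lerB.
have costE : Cost x (f x) t =
    (1 - lam) * Cost (v i).1 (v i).2 t + lam * Cost (v i.+1).1 (v i.+1).2 t.
  by rewrite (f_interp _ _ i1_lt) ?xi ?xi1 // /lam /Cost; field; rewrite subr_eq0 gt_eqF.
have [le_next | lt_next] := lerP (Cost (v i).1 (v i).2 t) (Cost (v i.+1).1 (v i.+1).2 t).
- by exists i; [lia | rewrite costE; nra].
- by exists i.+1 => //; rewrite costE; nra.
Qed.

Lemma ROC_points_cost_ge_vertex t : 0 <= t ->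
  exists2 j, (j < size s)%N & ROC_points f `<=` cost_ge t (Cost (v j).1 (v j).2 t).
Proof.
move=> t0; have s_gt0 : (0 < size s)%N by exact: ltnW.
pose C (i : 'I_(size s)) := Cost (v i).1 (v i).2 t.
case: (@arg_minP _ _ _ (Ordinal s_gt0) xpredT C isT) => j _ j_min.
have vertex_ge i : (i < size s)%N -> C j <= Cost (v i).1 (v i).2 t.
  by move=> i_lt; exact: (j_min (Ordinal i_lt)).
exists j => // -[x y]; rewrite /cost_ge /ROC_points /=.
move=> -[[x01 ->] | [[-> ->] | [[-> ->] | [-> ->]]]].
- by have [i i_lt /(le_trans (vertex_ge i i_lt))] := curve_cost_ge_vertex t x x01.
- by have := vertex_ge 0%N s_gt0; rewrite s_first.
- by have := vertex_ge (size s).-1; rewrite ltn_predL s_last; apply.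
- by have := vertex_ge 0%N s_gt0; rewrite /C s_first /Cost /=; lra.
Qed.

End ROCVertices.

Lemma ROC_curve_min_cost {R : realType} {f : R -> R} {t : R} :
  ROC_curve f -> 0 <= t ->
  exists x0, [/\ 0 <= x0 <= 1, 0 <= f x0 <= 1 &
                 ROC_points f `<=` cost_ge t (Cost x0 (f x0) t)].
Proof.
move=> [s [[s_size s_first s_last s_bound s_incr] f_interp]] t0.
have [j j_lt j_min] :=
  ROC_points_cost_ge_vertex s_size s_first s_last s_incr f_interp t t0.
have [vj1 vj2] := s_bound j j_lt.
by exists (nth (0, 0) s j).1; rewrite (f_vertex s_size s_incr f_interp j j_lt).
Qed.

Lemma ROC_points_cost_ge_corners {R : realType} {f : R -> R} {t c : R} :
  ROC_points f `<=` cost_ge t c -> c <= t /\ c <= 1 - t.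
Proof.
move=> fc; split.
- have : cost_ge t c (1, 1) by apply: fc; right; right; left.
  by rewrite /cost_ge /Cost /= subrr !mulr0 addr0 mulr1.
- have : cost_ge t c (0, 0) by apply: fc; right; left.
  by rewrite /cost_ge /Cost /= mulr0 add0r !subr0 mulr1.
Qed.

Theorem theorem24 (R : realType) (f : R -> R) (a b h k : R) :
  ROC_curve f -> 0 <= a -> a < b -> b <= 1 ->
  (forall t, a <= t <= b -> optimal_point f t h k) ->
  VOROS f a b =
  (((b - a)^-1)%:E *
   \int[@lebesgue_measure R]_(t in `[a, b])
      (1 - (Cost h k t) ^+ 2 / (2 * t * (1 - t)))%:E)%E.
Proof.
move=> roc a0 _ b1 opt; rewrite /VOROS; congr (_ * _)%E.
apply: eq_integral => t; rewrite inE /= in_itv /= => tab.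
have t01 : 0 <= t <= 1.
  by case/andP: tab => ta tb; rewrite (le_trans a0 ta) (le_trans tb b1).
have [t0 _] := andP t01.
have [x0 [x01 /andP[_ fx0_le1] x0_min]] := ROC_curve_min_cost roc t0.
have [x0_ge0 _] := andP x01.
have [[hk_closure _] hk_opt] := opt t tab.
have cost_hk : Cost h k t = Cost x0 (f x0) t.
  apply: le_anti; rewrite (closure_cost_ge (conv_hull_cost_ge x0_min) _ hk_closure).
  by rewrite (hk_opt (x0, f x0)) //; apply: sub_conv_hull; left.
have curve_min x : 0 <= x <= 1 -> Cost x0 (f x0) t <= Cost x (f x) t.
  by move=> x01'; apply: (x0_min (x, f x)); left.
have [le_t le_1t] := ROC_points_cost_ge_corners x0_min.
have cost_ge0 := Cost_ge0 t01 x0_ge0 fx0_le1.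
by rewrite cost_hk (ereal_sup_lesser_area x01 curve_min) lesser_area_cost // cost_ge0.
Qed.
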